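(* Let $n\ge1$, $\vec p,\vec q\in[0,1]^n$, and $N=\{1,\dots,n\}$. For nonempty $A\subseteq N$ put $\bar p_A=|A|^{-1}\sum_{i\in A}p_i$, $\bar q_A=|A|^{-1}\sum_{i\in A}q_i$, and $$\delta_A=\mathrm{TV}\big(\mathrm{Bin}(|A|,\bar p_A),\mathrm{Bin}(|A|,\bar q_A)\big).$$ If $I,J$ form a partition of $N$ with $I,J\ne\emptyset$, then $\delta_N\le2(\delta_I+\delta_J)$.
   Context: $\mathrm{Bin}(m,\theta)$ is the binomial distribution; $\mathrm{TV}(P,Q)=\frac12\sum_\omega|P(\omega)-Q(\omega)|$ is the total variation distance. *)

From mathcomp Require Import all_boot all_order all_algebra.
Set Implicit Arguments. Unset Strict Implicit. Unset Printing Implicit Defensive.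
Import Order.TTheory GRing.Theory Num.Theory.
Local Open Scope ring_scope.

(* Binomial pmf Bin(m, th) at k (for k <= m; zero for k > m since 'C(m,k)=0). *)
Definition binom_pmf {R : realFieldType} (m : nat) (th : R) (k : nat) : R :=
  ('C(m, k))%:R * th ^+ k * (1 - th) ^+ (m - k).

(* Total variation distance between Bin(m,a) and Bin(m,b); both are supported
   on {0,...,m}, so the sum over omega in {0..m} is the full sum. *)
Definition tv_binom {R : realFieldType} (m : nat) (a b : R) : R :=
  2^-1 * \sum_(k < m.+1) `|binom_pmf m a k - binom_pmf m b k|.

Definition avg {R : realFieldType} {n : nat} (x : 'I_n -> R) (A : {set 'I_n}) : R :=
  (#|A|%:R)^-1 * \sum_(i in A) x i.

Definition delta {R : realFieldType} {n : nat} (p q : 'I_n -> R) (A : {set 'I_n}) : R :=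
  tv_binom #|A| (avg p A) (avg q A).

(* Encode Bin(m, x) by its generating polynomial (x X + 1 - x)^m, so that twice
   the total variation distance between Bin(m, a) and Bin(m, c) is the l1 norm
   g(m) of the difference of two such polynomials.  The l1 norm of coefficients
   is submultiplicative and these polynomials have norm 1, so g is subadditive;
   deleting a uniformly random trial shows that g is nondecreasing; together they
   give g(K) <= (K + k) g(k) / k.  For k = |I|, l = |J| and n = k + l, the mean
   of p over N is (k a + l b) / n where a, b are its means over I, J.
   Conditioning on the number j of trials drawn from J writes Bin(n, .) as a
   Bin(n, l/n)-average of the convolutions Bin(n - j, a) * Bin(j, b), hence
   g_N(n) <= E[(n - j + k) g_I(k) / k + (j + l) g_J(l) / l] = 2 g_I(k) + 2 g_J(l)
   because E[j] = l. *)

From mathcomp Require Import all_boot all_order all_algebra.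
From mathcomp Require Import ring lra zify.
Set Implicit Arguments. Unset Strict Implicit. Unset Printing Implicit Defensive.
Import Order.TTheory GRing.Theory Num.Theory.
Local Open Scope ring_scope.

Section L1Norm.
Variable R : numDomainType.
Implicit Types p q : {poly R}.

Definition l1norm p : R := \sum_(i < size p) `|p`_i|.

Lemma l1normE p N : (size p <= N)%N -> l1norm p = \sum_(i < N) `|p`_i|.
Proof.
move=> hN; rewrite /l1norm -(subnKC hN) big_split_ord /=.
rewrite [X in _ = _ + X]big1 ?addr0 // => i _.
by rewrite nth_default ?normr0 // leq_addr.
Qed.

Lemma l1norm_ge0 p : 0 <= l1norm p.
Proof. exact: sumr_ge0. Qed.

Lemma l1normC c : l1norm c%:P = `|c|.
Proof. by rewrite (@l1normE _ 1) ?size_polyC ?leq_b1 // big_ord1 coefC. Qed.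

Lemma l1normD p q : l1norm (p + q) <= l1norm p + l1norm q.
Proof.
set N := maxn (size p) (size q).
rewrite (@l1normE (p + q) N) ?(leq_trans (size_polyD p q)) //.
rewrite (@l1normE p N) ?leq_maxl // (@l1normE q N) ?leq_maxr // -big_split.
by apply: ler_sum => i _; rewrite coefD ler_normD.
Qed.

Lemma l1normZ c p : l1norm (c *: p) <= `|c| * l1norm p.
Proof.
rewrite (@l1normE _ (size p)) ?size_scale_leq // mulr_sumr.
by apply: ler_sum => i _; rewrite coefZ normrM.
Qed.

Lemma l1norm_sum (I : Type) (r : seq I) (F : I -> {poly R}) :
  l1norm (\sum_(i <- r) F i) <= \sum_(i <- r) l1norm (F i).
Proof.
elim/big_rec2: _ => [|i y1 y2 _ IH]; first by rewrite l1normC normr0.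
exact: le_trans (l1normD _ _) (lerD (lexx _) IH).
Qed.

Lemma l1normXnM i p : l1norm ('X^i * p) = l1norm p.
Proof.
rewrite (@l1normE _ (i + size p)); last first.
  by apply: leq_trans (size_polyMleq _ _) _; rewrite size_polyXn addSn.
rewrite big_split_ord /= big1 ?add0r => [|j _]; last first.
  by rewrite coefXnM ltn_ord normr0.
by apply: eq_bigr => j _; rewrite coefXnM ltnNge leq_addr /= addKn.
Qed.

Lemma l1normXn i : l1norm 'X^i = 1.
Proof. by rewrite -['X^i]mulr1 l1normXnM -polyC1 l1normC normr1. Qed.

Lemma l1normM p q : l1norm (p * q) <= l1norm p * l1norm q.
Proof.
rewrite -{1}[p]coefK poly_def mulr_suml.
apply: le_trans (l1norm_sum _ _) _; rewrite /l1norm mulr_suml.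
apply: ler_sum => i _; rewrite -scalerAl.
by apply: le_trans (l1normZ _ _) _; rewrite l1normXnM.
Qed.

Lemma l1norm_exp_le1 p m : l1norm p <= 1 -> l1norm (p ^+ m) <= 1.
Proof.
move=> p1; elim: m => [|m IH]; first by rewrite expr0 -polyC1 l1normC normr1.
rewrite exprS; apply: le_trans (l1normM _ _) _.
by rewrite -[1]mulr1 ler_pM ?l1norm_ge0.
Qed.

Lemma l1normMB p1 p2 q1 q2 : l1norm p2 <= 1 -> l1norm q1 <= 1 ->
  l1norm (p1 * p2 - q1 * q2) <= l1norm (p1 - q1) + l1norm (p2 - q2).
Proof.
move=> p2_le1 q1_le1.
have -> : p1 * p2 - q1 * q2 = (p1 - q1) * p2 + q1 * (p2 - q2) by ring.
apply: le_trans (l1normD _ _) (lerD _ _); apply: le_trans (l1normM _ _) _.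
  by rewrite ler_piMr ?l1norm_ge0.
by rewrite ler_piMl ?l1norm_ge0.
Qed.

End L1Norm.

Section BinomialPolynomials.
Variable R : realFieldType.
Implicit Types (a b c d x t : R) (D : {poly R}).

Definition bernp x : {poly R} := x%:P * 'X + (1 - x)%:P.
Definition binomp m x : {poly R} := bernp x ^+ m.

Lemma l1norm_binomp_le1 m x : 0 <= x <= 1 -> l1norm (binomp m x) <= 1.
Proof.
move=> /andP[x_ge0 x_le1]; apply: l1norm_exp_le1.
apply: le_trans (l1normD _ _) _; rewrite mul_polyC l1normC -['X]expr1.
apply: le_trans (lerD (l1normZ _ _) (lexx _)) _.
by rewrite l1normXn mulr1 !ger0_norm ?subr_ge0 // addrC subrK.
Qed.

Lemma size_binomp m x : (size (binomp m x) <= m.+1)%N.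
Proof.
apply: leq_trans (size_poly_exp_leq _ _) _.
have : (size (bernp x) <= 2)%N.
  by rewrite /bernp size_MXaddC; case: ifP => // _; rewrite size_polyC ltnS leq_b1.
by rewrite ltnS; nia.
Qed.

Lemma coef_binomp m x j : (binomp m x)`_j = binom_pmf m x j.
Proof.
rewrite /binomp /bernp addrC exprDn coef_sum.
under eq_bigr do rewrite exprMn -!polyC_exp mulrA -polyCM coefMn coefCM coefXn.
rewrite /binom_pmf; case: (ltnP j m.+1) => hj.
  rewrite (bigD1 (Ordinal hj)) //= big1 ?addr0 => [|i hi].
    by rewrite eqxx mulr1 -mulr_natl; ring.
  have /negbTE -> : j != i by apply: contra hi => /eqP ji; apply/eqP/val_inj.
  by rewrite mulr0 mul0rn.
rewrite bin_small // !mul0r big1 // => i _.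
have /negbTE -> : j != i by apply: contraTneq hj => ->; rewrite -ltnNge.
by rewrite mulr0 mul0rn.
Qed.

Definition bin_dist a c m := l1norm (binomp m a - binomp m c).

Lemma tv_binomE m a c : tv_binom m a c = 2^-1 * bin_dist a c m.
Proof.
rewrite /tv_binom /bin_dist (@l1normE _ _ m.+1); last first.
  by apply: leq_trans (size_polyD _ _) _; rewrite size_polyN geq_max !size_binomp.
by congr (_ * _); apply: eq_bigr => i _; rewrite coefB !coef_binomp.
Qed.

Lemma bin_dist_ge0 a c m : 0 <= bin_dist a c m.
Proof. exact: l1norm_ge0. Qed.

Lemma bin_distD a c m1 m2 : 0 <= a <= 1 -> 0 <= c <= 1 ->
  bin_dist a c (m1 + m2) <= bin_dist a c m1 + bin_dist a c m2.
Proof.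
by move=> a01 c01; rewrite /bin_dist /binomp !exprD l1normMB ?l1norm_binomp_le1.
Qed.

(* Deleting one of m+1 independent trials chosen uniformly at random: a success
   count j becomes j-1 with probability j/(m+1).  On polynomials of size at most
   m+2 this is a Markov kernel, hence an l1-contraction. *)
Definition thin m D := D + (m.+1%:R)^-1 *: ((1 - 'X) * D^`()).

Lemma thinB m : {morph thin m : D1 D2 / D1 - D2}.
Proof. by move=> D1 D2; rewrite /thin derivB mulrBr scalerBr opprD addrACA. Qed.

Lemma thin_Xn m j : thin m 'X^j =
  (1 - j%:R / m.+1%:R) *: 'X^j + (j%:R / m.+1%:R) *: 'X^(j.-1).
Proof.
rewrite /thin derivXn; case: j => [|j] /=.
  by rewrite mulr0n mulr0 scaler0 addr0 !mul0r subr0 scale1r scale0r addr0.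
rewrite -scaler_nat -scalerAr scalerA mulrBl mul1r -exprS.
by rewrite scalerBr scalerBl scale1r [_^-1 * _]mulrC addrA addrAC.
Qed.

Lemma thin_expand m D : thin m D = \sum_(j < size D) D`_j *: thin m 'X^j.
Proof.
rewrite [in LHS](_ : D = \sum_(j < size D) D`_j *: 'X^j); last first.
  by rewrite -poly_def coefK.
rewrite /thin linear_sum /= mulr_sumr scaler_sumr -big_split /=.
apply: eq_bigr => j _.
by rewrite derivZ -scalerAr scalerA [_^-1 * _]mulrC -scalerA scalerDr.
Qed.

Lemma thin_binomp m x : thin m (binomp m.+1 x) = binomp m x.
Proof.
rewrite /thin /binomp deriv_exp /=.
have -> : (bernp x)^`() = x%:P.
  by rewrite /bernp derivD derivC addr0 deriv_mulC derivX mulr1.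
rewrite mulrnAr -[X in _^-1 *: X]scaler_nat scalerA mulVf ?pnatr_eq0 //.
rewrite scale1r exprS; move: (bernp x ^+ m) => B.
by rewrite /bernp polyCB polyC1; ring.
Qed.

Lemma l1norm_thin m D : (size D <= m.+2)%N -> l1norm (thin m D) <= l1norm D.
Proof.
move=> sizeD; rewrite thin_expand; apply: le_trans (l1norm_sum _ _) _.
apply: ler_sum => j _; apply: le_trans (l1normZ _ _) _.
rewrite -[leRHS]mulr1 ler_wpM2l // thin_Xn.
have j_le : (j <= m.+1)%N by rewrite -ltnS (leq_trans (ltn_ord j)).
set s := (_ / _ : R).
have s_ge0 : 0 <= s by rewrite divr_ge0.
have s_le1 : s <= 1 by rewrite ler_pdivrMr ?ltr0n // mul1r ler_nat.
apply: le_trans (l1normD _ _) _.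
apply: le_trans (lerD (l1normZ _ _) (l1normZ _ _)) _.
by rewrite !l1normXn !mulr1 !ger0_norm ?subr_ge0 // subrK.
Qed.

Lemma bin_dist_homo a c : {homo bin_dist a c : m1 m2 / (m1 <= m2)%N >-> m1 <= m2}.
Proof.
apply: (homo_leq lexx le_trans) => m.
rewrite /bin_dist -(thin_binomp m a) -(thin_binomp m c) -thinB l1norm_thin //.
by apply: leq_trans (size_polyD _ _) _; rewrite size_polyN geq_max !size_binomp.
Qed.

Lemma bin_dist_ratio a c k K : 0 <= a <= 1 -> 0 <= c <= 1 -> (0 < k)%N ->
  bin_dist a c K <= (K + k)%:R * (bin_dist a c k / k%:R).
Proof.
move=> a01 c01 k_gt0; set x := bin_dist a c k / k%:R.
have g_k : bin_dist a c k = k%:R * x by rewrite /x mulrC divfK ?pnatr_eq0 -?lt0n.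
have x_ge0 : 0 <= x by rewrite divr_ge0 ?bin_dist_ge0.
elim/ltn_ind: K => K IH; case: (leqP K k) => [K_le_k | k_lt_K].
  apply: le_trans (bin_dist_homo a c K_le_k) _.
  by rewrite g_k ler_wpM2r // ler_nat leq_addl.
rewrite -(subnK (ltnW k_lt_K)); apply: le_trans (bin_distD _ _ a01 c01) _.
have := IH (K - k)%N; rewrite ltn_subrL k_gt0 (ltn_trans k_gt0 k_lt_K) => /(_ isT).
rewrite g_k !natrD; lra.
Qed.

Lemma binom_pmf_ge0 m t j : 0 <= t <= 1 -> 0 <= binom_pmf m t j.
Proof.
by case/andP=> t_ge0 t_le1; rewrite /binom_pmf !mulr_ge0 ?exprn_ge0 ?subr_ge0.
Qed.

Lemma binom_pmfE m t j : binom_pmf m t j = (1 - t) ^+ (m - j) * t ^+ j *+ 'C(m, j).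
Proof. by rewrite /binom_pmf -mulr_natl; ring. Qed.

Lemma sum_binom_pmf m t : \sum_(j < m.+1) binom_pmf m t j = 1.
Proof.
rewrite -[RHS](expr1n _ m) -[X in X ^+ m](subrK t) exprDn.
by apply: eq_bigr => j _; rewrite binom_pmfE.
Qed.

Lemma binom_pmf_mean m t : \sum_(j < m.+1) binom_pmf m t j * j%:R = m%:R * t.
Proof.
case: m => [|m]; first by rewrite big_ord1 !mulr0 mul0r.
rewrite big_ord_recl mulr0 add0r.
transitivity (m.+1%:R * t * \sum_(j < m.+1) binom_pmf m t j).
  2: by rewrite sum_binom_pmf mulr1.
rewrite mulr_sumr; apply: eq_bigr => j _; rewrite lift0 /binom_pmf subSS.
have bin_diag : ('C(m.+1, j.+1) * j.+1 = m.+1 * 'C(m, j))%N.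
  by rewrite mulnC -mul_bin_diag.
transitivity (('C(m.+1, j.+1) * j.+1)%:R * t * t ^+ j * (1 - t) ^+ (m - j)).
  by rewrite natrM exprS; ring.
by rewrite bin_diag natrM; ring.
Qed.

Lemma bernp_mix t a b : bernp ((1 - t) * a + t * b) = (1 - t) *: bernp a + t *: bernp b.
Proof. by rewrite /bernp -!mul_polyC !(rmorphB, rmorphD, rmorphM) /= polyC1; ring. Qed.

Lemma binomp_mix m t a b : binomp m ((1 - t) * a + t * b) =
  \sum_(j < m.+1) binom_pmf m t j *: (binomp (m - j) a * binomp j b).
Proof.
rewrite /binomp bernp_mix exprDn; apply: eq_bigr => j _.
rewrite !exprZn -scalerAl -scalerAr scalerA -scaler_nat scalerA binom_pmfE.
by rewrite mulr_natl.
Qed.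

Lemma sum_binom_pmf_affine m t (u v : R) :
  \sum_(j < m.+1) binom_pmf m t j * (u + v * j%:R) = u + v * (m%:R * t).
Proof.
under eq_bigr do rewrite mulrDr mulrCA.
by rewrite big_split /= -mulr_suml -mulr_sumr sum_binom_pmf binom_pmf_mean mul1r.
Qed.

Lemma bin_dist_mix_le_sum m t a b c d :
  0 <= t <= 1 -> 0 <= b <= 1 -> 0 <= c <= 1 ->
  bin_dist ((1 - t) * a + t * b) ((1 - t) * c + t * d) m <=
  \sum_(j < m.+1) binom_pmf m t j * (bin_dist a c (m - j) + bin_dist b d j).
Proof.
move=> t01 b01 c01; rewrite /bin_dist !binomp_mix -sumrB.
under eq_bigr do rewrite -scalerBr.
apply: le_trans (l1norm_sum _ _) _; apply: ler_sum => j _.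
apply: le_trans (l1normZ _ _) _; rewrite ger0_norm ?binom_pmf_ge0 //.
by rewrite ler_wpM2l ?binom_pmf_ge0 ?l1normMB ?l1norm_binomp_le1.
Qed.

Lemma bin_dist_mix a b c d k l :
  0 <= a <= 1 -> 0 <= b <= 1 -> 0 <= c <= 1 -> 0 <= d <= 1 ->
  (0 < k)%N -> (0 < l)%N ->
  bin_dist (k%:R / (k + l)%:R * a + l%:R / (k + l)%:R * b)
           (k%:R / (k + l)%:R * c + l%:R / (k + l)%:R * d) (k + l)
  <= 2 * (bin_dist a c k + bin_dist b d l).
Proof.
move=> a01 b01 c01 d01 k_gt0 l_gt0.
set n := (k + l)%N; set t := l%:R / n%:R.
have n_gt0 : 0 < n%:R :> R by rewrite ltr0n addn_gt0 k_gt0.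
have n_neq0 := lt0r_neq0 n_gt0.
have -> : k%:R / n%:R = 1 - t.
  by apply: (mulIf n_neq0); rewrite mulrBl !divfK // mul1r /n natrD addrK.
have t01 : 0 <= t <= 1.
  by rewrite divr_ge0 //= ler_pdivrMr // mul1r ler_nat leq_addl.
have nt : n%:R * t = l%:R by rewrite /t mulrC divfK.
apply: le_trans (bin_dist_mix_le_sum _ _ _ t01 b01 c01) _.
set x := bin_dist a c k / k%:R; set y := bin_dist b d l / l%:R.
apply: (@le_trans _ _ (\sum_(j < n.+1)
    binom_pmf n t j * (((n + k)%:R * x + l%:R * y) + (y - x) * j%:R))).
  apply: ler_sum => j _; rewrite ler_wpM2l ?binom_pmf_ge0 //.
  have j_le : (j <= n)%N by rewrite -ltnS.
  have := bin_dist_ratio (n - j) a01 c01 k_gt0.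
  have := bin_dist_ratio j b01 d01 l_gt0.
  rewrite -/x -/y !natrD natrB // !natrD; lra.
have g_k : bin_dist a c k = k%:R * x by rewrite /x mulrC divfK ?pnatr_eq0 -?lt0n.
have g_l : bin_dist b d l = l%:R * y by rewrite /y mulrC divfK ?pnatr_eq0 -?lt0n.
rewrite sum_binom_pmf_affine nt g_k g_l /n !natrD; lra.
Qed.

End BinomialPolynomials.

Section Averages.
Variables (R : realFieldType) (n : nat) (x : 'I_n -> R).

Lemma sum_avg (A : {set 'I_n}) : \sum_(i in A) x i = #|A|%:R * avg x A.
Proof.
have [->|/set0Pn[i iA]] := eqVneq A set0; first by rewrite big_set0 cards0 mul0r.
by rewrite /avg mulrA mulfV ?mul1r // pnatr_eq0 -lt0n card_gt0; apply/set0Pn; exists i.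
Qed.

Lemma avg_in01 (A : {set 'I_n}) :
  (forall i, 0 <= x i <= 1) -> A != set0 -> 0 <= avg x A <= 1.
Proof.
move=> x01 A_neq0; have A_gt0 : (0 < #|A|)%N by rewrite card_gt0.
have sum_ge0 : 0 <= \sum_(i in A) x i by apply: sumr_ge0 => i _; case/andP: (x01 i).
have sum_le : \sum_(i in A) x i <= #|A|%:R.
  by rewrite -sumr_const; apply: ler_sum => i _; case/andP: (x01 i).
rewrite /avg mulr_ge0 ?invr_ge0 //=.
by rewrite mulrC ler_pdivrMr ?ltr0n // mul1r.
Qed.

Lemma avg_setU (I J : {set 'I_n}) : [disjoint I & J] ->
  avg x (I :|: J) = #|I|%:R / (#|I| + #|J|)%:R * avg x I
                    + #|J|%:R / (#|I| + #|J|)%:R * avg x J.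
Proof.
move=> IJ; rewrite {1}/avg cardsU (disjoint_setI0 IJ) cards0 subn0.
rewrite (eq_bigl [predU I & J]) => [|i]; last by rewrite in_setU.
by rewrite bigU //= !sum_avg mulrDr !mulrA ![_^-1 * _%:R]mulrC.
Qed.

End Averages.

Theorem lemma4 (R : realFieldType) (n : nat) (p q : 'I_n -> R)
  (hp : forall i, 0 <= p i <= 1) (hq : forall i, 0 <= q i <= 1)
  (hn : (1 <= n)%N) (I J : {set 'I_n})
  (hIJ : [disjoint I & J]) (hcov : I :|: J = [set: 'I_n])
  (hI : I != set0) (hJ : J != set0) :
  delta p q [set: 'I_n] <= 2 * (delta p q I + delta p q J).
Proof.
have cardT : #|[set: 'I_n]| = (#|I| + #|J|)%N.
  by rewrite -hcov cardsU (disjoint_setI0 hIJ) cards0 subn0.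
have I_gt0 : (0 < #|I|)%N by rewrite card_gt0.
have J_gt0 : (0 < #|J|)%N by rewrite card_gt0.
rewrite /delta cardT -hcov !avg_setU // !tv_binomE.
have := bin_dist_mix (avg_in01 hp hI) (avg_in01 hp hJ) (avg_in01 hq hI)
  (avg_in01 hq hJ) I_gt0 J_gt0.
lra.
Qed.
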